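(* Let $q,m\ge0$, $k\ge1$ be integers, $\zeta$ a root of unity with $\zeta^{3^k-1}=1$, and let $(c,a)\in Z(q,m,\zeta)$ be such that $Q_{c,a}=\zeta P^m_{c,a}+(1-\zeta)\frac c2$ commutes with $P^k_{c,a}$. Then $$Q_{c,a}\big(\mathrm{Crit}(P^{k+m}_{c,a})\big)=Q_{c,a}\big(\mathrm{Crit}(P^m_{c,a})\big)\cup\mathrm{Crit}(P^k_{c,a}).$$
   Context: $P_{c,a}(z)=\frac13z^3-\frac c2z^2+a^3$, $(c,a)\in\mathbb{C}^2$, with critical points $c_0=0$, $c_1=c$; $\mathrm{Crit}(R)$ denotes the set of critical points of a polynomial $R$ (with $\mathrm{Crit}(P^0)=\emptyset$). For integers $q,m\ge0$ and a root of unity $\zeta$, $Z(q,m,\zeta)$ is the set of $(c,a)$ such that $Q_{c,a}:=\zeta P^m_{c,a}+(1-\zeta)\frac c2$ commutes with all iterates $P^j_{c,a}$ ($j\ge1$) with $\zeta^{3^j}=\zeta$, and either $Q_{c,a}(P^q_{c,a}(c_0))=P^q_{c,a}(c_1)$ or $Q_{c,a}(P^q_{c,a}(c_1))=P^q_{c,a}(c_0)$. *)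

From HB Require Import structures.
From mathcomp Require Import all_boot all_order all_algebra.
From mathcomp Require Import complex.
From mathcomp Require Import boolp classical_sets reals.
Set Implicit Arguments. Unset Strict Implicit. Unset Printing Implicit Defensive.
Import Order.TTheory GRing.Theory Num.Theory.
Local Open Scope ring_scope.
Local Open Scope complex_scope.

Definition Pca (R : realType) (c a : R[i]) : {poly R[i]} :=
  3^-1 *: 'X^3 - (c / 2) *: 'X^2 + (a ^+ 3)%:P.

Definition Piter (R : realType) (c a : R[i]) (n : nat) : {poly R[i]} :=
  iter n (fun p => Pca c a \Po p) 'X.

Definition Qpoly (R : realType) (zeta : R[i]) (m : nat) (c a : R[i]) : {poly R[i]} :=
  zeta *: Piter c a m + ((1 - zeta) * (c / 2))%:P.

Definition Crit (R : realType) (p : {poly R[i]}) : set R[i] :=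
  [set z | p^`().[z] = 0].

Definition pcommute (R : realType) (p r : {poly R[i]}) : Prop :=
  p \Po r = r \Po p.

Definition rootunity (R : realType) (z : R[i]) : Prop :=
  exists n : nat, (0 < n)%N /\ z ^+ n = 1.

(* (c,a) \in Z(q,m,zeta); critical points c_0 = 0, c_1 = c *)
Definition inZ (R : realType) (q m : nat) (zeta c a : R[i]) : Prop :=
  (forall j : nat, (1 <= j)%N -> zeta ^+ (3 ^ j) = zeta ->
      pcommute (Qpoly zeta m c a) (Piter c a j)) /\
  ((Qpoly zeta m c a).[(Piter c a q).[0]] = (Piter c a q).[c] \/
   (Qpoly zeta m c a).[(Piter c a q).[c]] = (Piter c a q).[0]).

From HB Require Import structures.
From mathcomp Require Import all_boot all_order all_algebra.
From mathcomp Require Import complex.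
From mathcomp Require Import boolp classical_sets reals.
Import Order.TTheory GRing.Theory Num.Theory.
Local Open Scope ring_scope.
Local Open Scope classical_set_scope.

(* Q = A o P^m with A the affine map z |-> zeta z + (1 - zeta) c/2.  Since P^m
   is surjective and commutes with P^k, the commutation of Q with P^k cancels
   down to A o P^k = P^k o A; differentiating, (P^k)' is A-invariant, so the
   bijection A permutes Crit(P^k).  The chain rule gives
   Crit(P^k o P^m) = (P^m)^-1 (Crit P^k) \/ Crit P^m, and applying Q = A o P^m
   to the first part yields A (Crit P^k) = Crit P^k. *)

Lemma eq_poly_horner {R : numDomainType} {p q : {poly R}} :
  (forall x, p.[x] = q.[x]) -> p = q.
Proof.
move=> pq; apply/eqP; rewrite -subr_eq0; apply/eqP.
apply: (@roots_geq_poly_eq0 _ _ [seq i%:R | i <- iota 0 (size (p - q))]).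
- by apply/allP => _ /mapP[i _ ->]; rewrite /root hornerD hornerN pq subrr.
- by rewrite map_inj_uniq ?iota_uniq // => i j /eqP; rewrite eqr_nat => /eqP.
- by rewrite size_map size_iota.
Qed.

Lemma comp_poly_surj_cancel {R : numDomainType} {p q r : {poly R}} :
  (forall y, exists x, r.[x] = y) -> p \Po r = q \Po r -> p = q.
Proof.
move=> r_surj pqr; apply: eq_poly_horner => y; have [x <-] := r_surj y.
by rewrite -!horner_comp pqr.
Qed.

Lemma horner_surj {F : closedFieldType} {p : {poly F}} :
  (1 < size p)%N -> forall u, exists x, p.[x] = u.
Proof.
move=> p_gt1 u; have size_pu : size (p - u%:P) = size p.
  by rewrite size_polyDl // size_polyN (leq_ltn_trans (size_polyC_leq1 u)).
have /closed_rootP[x] : size (p - u%:P) != 1%N by rewrite size_pu gtn_eqF.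
by rewrite /root hornerD hornerN hornerC subr_eq0 => /eqP px; exists x.
Qed.

Lemma Crit_comp {R : realType} (p r : {poly R[i]}) :
  Crit (p \Po r) = horner r @^-1` Crit p `|` Crit r.
Proof.
apply/seteqP; split => z; rewrite /Crit /= deriv_comp hornerM horner_comp.
  by move/eqP; rewrite mulf_eq0 => /orP[/eqP|/eqP]; [left|right].
by case=> ->; rewrite ?mul0r ?mulr0.
Qed.

Section AffineSymmetry.
Context {R : realType} {s b : R[i]}.
Hypothesis s_neq0 : s != 0.
Let A : {poly R[i]} := s *: 'X + b%:P.

Lemma horner_affine z : A.[z] = s * z + b.
Proof. by rewrite /A hornerD hornerZ hornerX hornerC. Qed.

Lemma deriv_comm_affine {p : {poly R[i]}} :
  A \Po p = p \Po A -> forall w, p^`().[A.[w]] = p^`().[w].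
Proof.
move=> Ap w; move: Ap => /(congr1 (@deriv _)) /(congr1 (horner^~ w)) /=.
have dA : A^`() = s%:P by rewrite /A derivD derivZ derivX derivC addr0 alg_polyC.
rewrite !deriv_comp dA comp_polyC !hornerM !horner_comp !hornerC mulrC.
by move/(mulIf s_neq0)/esym.
Qed.

Lemma Crit_comm_affine {p : {poly R[i]}} :
  A \Po p = p \Po A -> horner A @` Crit p = Crit p.
Proof.
move=> Ap; have inv := deriv_comm_affine Ap.
apply/seteqP; split => [_ [z pz <-]|w pw]; rewrite /Crit /=.
  by rewrite inv.
exists ((w - b) / s); last by rewrite horner_affine mulrC divfK // subrK.
by rewrite -inv horner_affine mulrC divfK // subrK.
Qed.

End AffineSymmetry.

Lemma Piter_add {R : realType} (c a : R[i]) (i j : nat) :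
  Piter c a (i + j) = Piter c a i \Po Piter c a j.
Proof.
elim: i => [|i IH]; first by rewrite /Piter /= comp_polyX.
by rewrite addSn /Piter !iterS -/(Piter c a (i + j)) IH comp_polyA.
Qed.

Lemma Piter_comm {R : realType} (c a : R[i]) (i j : nat) :
  Piter c a i \Po Piter c a j = Piter c a j \Po Piter c a i.
Proof. by rewrite -!Piter_add addnC. Qed.

Lemma size_Pca_gt1 {R : realType} (c a : R[i]) : (1 < size (Pca c a))%N.
Proof.
have coef3 : (Pca c a)`_3 != 0.
  by rewrite /Pca !coefE /= mulr1 mulr0 !subr0 addr0 invr_eq0 pnatr_eq0.
apply: (@leq_trans 4) => //; rewrite ltnNge.
by apply: contra coef3 => /(nth_default 0) ->.
Qed.

Lemma Piter_surj {R : realType} (c a : R[i]) (n : nat) :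
  forall u, exists z, (Piter c a n).[z] = u.
Proof.
elim: n => [|n IH] u; first by exists u; rewrite /Piter /= hornerX.
have [v <-] := horner_surj (size_Pca_gt1 c a) u; have [z <-] := IH v.
by exists z; rewrite /Piter iterS horner_comp.
Qed.

Lemma rootunity_neq0 {R : realType} {zeta : R[i]} : rootunity zeta -> zeta != 0.
Proof.
case=> n [n_gt0 zn]; apply: contra_eq_neq zn => ->.
by rewrite expr0n gtn_eqF // eq_sym oner_neq0.
Qed.

Theorem lemma7p2 (R : realType) (q m k : nat) (zeta c a : R[i])
  (hk : (1 <= k)%N)
  (hzeta : rootunity zeta)
  (hzk : (zeta ^+ (3 ^ k - 1)%N = 1)%R)
  (hZ : inZ q m zeta c a)
  (hcomm : pcommute (Qpoly zeta m c a) (Piter c a k)) :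
  (fun z => (Qpoly zeta m c a).[z]) @` Crit (Piter c a (k + m)) =
  ((fun z => (Qpoly zeta m c a).[z]) @` Crit (Piter c a m)) `|` Crit (Piter c a k).
Proof.
set Pm := Piter c a m; set Pk := Piter c a k.
set A : {poly R[i]} := zeta *: 'X + ((1 - zeta) * (c / 2))%:P.
have QE : Qpoly zeta m c a = A \Po Pm.
  by rewrite /Qpoly comp_polyD comp_polyZ comp_polyX comp_polyC.
have APk : A \Po Pk = Pk \Po A.
  apply: (comp_poly_surj_cancel (Piter_surj c a m)).
  by rewrite -comp_polyA (Piter_comm c a k m) comp_polyA -QE hcomm QE comp_polyA.
have QfE : (fun z => (Qpoly zeta m c a).[z]) = horner A \o horner Pm.
  by apply/funext => z; rewrite QE horner_comp.
have Pm_range : range (horner Pm) = setT.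
  by apply/seteqP; split => // u _; have [z <-] := Piter_surj c a m u; exists z.
rewrite QfE Piter_add Crit_comp image_setU -image_comp image_preimage //.
by rewrite (Crit_comm_affine (rootunity_neq0 hzeta) APk) setUC.
Qed.
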